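(* Let $M\ge K\ge 1$, $N\ge1$, $\sigma^2>0$, and let $\boldsymbol{H}_{\mathrm d}=[\boldsymbol h_{\mathrm d,1},\dots,\boldsymbol h_{\mathrm d,K}]\in\mathbb C^{M\times K}$, $\boldsymbol H_{\mathrm r}=[\boldsymbol h_{\mathrm r,1},\dots,\boldsymbol h_{\mathrm r,K}]\in\mathbb C^{N\times K}$ and $\boldsymbol G\in\mathbb C^{M\times N}$. Assume that $\boldsymbol H_{\mathrm d}$ has full column rank $K$ and that $$\sigma_{\max}(\boldsymbol G)\,\sigma_{\max}(\boldsymbol H_{\mathrm r})<\sigma_{\min}(\boldsymbol H_{\mathrm d}).$$ Then for arbitrary targets $r_1,\dots,r_K\ge 0$, problem (P1) with unlimited power budgets is feasible: there exist $\boldsymbol\phi\in\mathbb C^N$ with $|\phi_n|=1$ for all $n$ and $\boldsymbol q\in\mathbb R^K$, $\boldsymbol q>\boldsymbol 0$, such that $\widetilde\gamma_k(\boldsymbol\phi,\boldsymbol q)\ge r_k$ for all $k=1,\dots,K$.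
   Context: For $\boldsymbol\phi\in\mathbb C^N$ with unit-modulus entries, let $\boldsymbol\Phi=\mathrm{Diag}(\boldsymbol\phi)$ and define the effective channels $\boldsymbol h_k(\boldsymbol\phi)=\boldsymbol G\boldsymbol\Phi\boldsymbol h_{\mathrm r,k}+\boldsymbol h_{\mathrm d,k}$, $k=1,\dots,K$. For powers $\boldsymbol q=(q_1,\dots,q_K)\ge \boldsymbol 0$ set $\boldsymbol W_k(\boldsymbol\phi,\boldsymbol q)=\sigma^2\boldsymbol I_M+\sum_{i\ne k}q_i\boldsymbol h_i(\boldsymbol\phi)\boldsymbol h_i(\boldsymbol\phi)^H$ and define the (optimal linear receiver) SINR of user $k$ as $\widetilde\gamma_k(\boldsymbol\phi,\boldsymbol q)=q_k\,\boldsymbol h_k(\boldsymbol\phi)^H\boldsymbol W_k(\boldsymbol\phi,\boldsymbol q)^{-1}\boldsymbol h_k(\boldsymbol\phi)$. $\sigma_{\max}(\boldsymbol X)$ and $\sigma_{\min}(\boldsymbol X)$ denote the largest and smallest nonzero singular values of a matrix $\boldsymbol X$. Problem (P1) with unlimited power means: find $(\boldsymbol\phi,\boldsymbol q)$ with $|\phi_n|=1$ for all $n$, $\boldsymbol q\ge\boldsymbol 0$ (no upper bound), and $\widetilde\gamma_k(\boldsymbol\phi,\boldsymbol q)\ge r_k$ for all $k$. *)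

From HB Require Import structures.
From mathcomp Require Import all_boot all_order all_algebra.
From mathcomp Require Import complex.
Set Implicit Arguments. Unset Strict Implicit. Unset Printing Implicit Defensive.
Import Order.TTheory GRing.Theory Num.Theory.
Local Open Scope ring_scope.
Local Open Scope complex_scope.

Definition hermT (R : rcfType) (m n : nat) (X : 'M[R[i]]_(m, n)) : 'M[R[i]]_(n, m) :=
  map_mx (@conjc R) X^T.

Definition singval (R : rcfType) (m n : nat) (X : 'M[R[i]]_(m, n)) (s : R) : Prop :=
  0 < s /\ eigenvalue (hermT X *m X) ((s ^+ 2)%:C).

(* sigma_max(X) < t  (the largest nonzero singular value, 0 if X = 0, is < t)
   written as "every nonzero singular value is < t" etc.  The paper's
   hypothesis  sigma_max(G) sigma_max(Hr) < sigma_min(Hd)  is literally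
   max_{a} max_{b} a*b < min_{c} c, i.e. a*b < c for all nonzero singular
   values a of G, b of Hr, c of Hd. *)
Definition sv_condition (R : rcfType) (M N K : nat)
    (G : 'M[R[i]]_(M, N)) (Hr : 'M[R[i]]_(N, K)) (Hd : 'M[R[i]]_(M, K)) : Prop :=
  forall a b c, singval G a -> singval Hr b -> singval Hd c -> a * b < c.

Definition eff_chan (R : rcfType) (M N K : nat)
    (G : 'M[R[i]]_(M, N)) (Hr : 'M[R[i]]_(N, K)) (Hd : 'M[R[i]]_(M, K))
    (phi : 'rV[R[i]]_N) (k : 'I_K) : 'cV[R[i]]_M :=
  G *m diag_mx phi *m col k Hr + col k Hd.

Definition Wmat (R : rcfType) (M N K : nat)
    (G : 'M[R[i]]_(M, N)) (Hr : 'M[R[i]]_(N, K)) (Hd : 'M[R[i]]_(M, K))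
    (sigma2 : R) (phi : 'rV[R[i]]_N) (q : 'I_K -> R) (k : 'I_K) : 'M[R[i]]_M :=
  (sigma2%:C)%:M + \sum_(i < K | i != k)
      (q i)%:C *: (eff_chan G Hr Hd phi i *m hermT (eff_chan G Hr Hd phi i)).

Definition sinr (R : rcfType) (M N K : nat)
    (G : 'M[R[i]]_(M, N)) (Hr : 'M[R[i]]_(N, K)) (Hd : 'M[R[i]]_(M, K))
    (sigma2 : R) (phi : 'rV[R[i]]_N) (q : 'I_K -> R) (k : 'I_K) : R[i] :=
  (q k)%:C * (hermT (eff_chan G Hr Hd phi k)
                 *m invmx (Wmat G Hr Hd sigma2 phi q k)
                 *m eff_chan G Hr Hd phi k) 0 0.

From mathcomp Require Import all_boot all_order all_algebra.
From mathcomp Require Import complex spectral.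
Import Order.TTheory GRing.Theory Num.Theory.
Local Open Scope ring_scope.
Local Open Scope complex_scope.
Set Implicit Arguments. Unset Strict Implicit. Unset Printing Implicit Defensive.

(* Rayleigh bounds: diagonalising the Gram matrix X^H X by the spectral
      theorem, ||X y||^2 lies between the smallest and the largest
      eigenvalue of X^H X times ||y||^2; these eigenvalues are squared
      singular values of X.
   2. Hence sigma_max(G) sigma_max(Hr) < sigma_min(Hd) forces
      ||G Hr x|| < ||Hd x|| for x <> 0, so H has a trivial kernel and there
      are dual vectors w_k with h_i^H w_k = delta_ik.
   3. If h_i^H w = 0 for i <> k, then W_k w = sigma^2 w, and a
      Cauchy-Schwarz argument in the inner product defined by W_k gives
      SINR_k >= q_k / (sigma^2 ||w||^2), whatever the other powers are.
   4. Choosing q_k = (r_k + 1) sigma^2 ||w_k||^2 meets every target. *)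

Section HermitianTranspose.
Variable R : rcfType.
Local Notation C := (R[i]).

Lemma hermT_mul m n p (A : 'M[C]_(m, n)) (B : 'M[C]_(n, p)) :
  hermT (A *m B) = hermT B *m hermT A.
Proof. by rewrite /hermT trmx_mul map_mxM. Qed.

Lemma hermTK m n (A : 'M[C]_(m, n)) : hermT (hermT A) = A.
Proof. by apply/matrixP => i j; rewrite !mxE conjcK. Qed.

Lemma hermTD m n (A B : 'M[C]_(m, n)) : hermT (A + B) = hermT A + hermT B.
Proof. by apply/matrixP => i j; rewrite !mxE rmorphD. Qed.

Lemma hermTB m n (A B : 'M[C]_(m, n)) : hermT (A - B) = hermT A - hermT B.
Proof. by apply/matrixP => i j; rewrite !mxE rmorphB. Qed.

Lemma hermTN m n (A : 'M[C]_(m, n)) : hermT (- A) = - hermT A.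
Proof. by apply/matrixP => i j; rewrite !mxE rmorphN. Qed.

Lemma hermTZ m n (a : C) (A : 'M[C]_(m, n)) : hermT (a *: A) = conjc a *: hermT A.
Proof. by apply/matrixP => i j; rewrite !mxE rmorphM. Qed.

Lemma hermT0 m n : hermT (0 : 'M[C]_(m, n)) = 0.
Proof. by apply/matrixP => i j; rewrite !mxE conjc0. Qed.

Lemma hermT_sum m n (I : finType) (P : pred I) (F : I -> 'M[C]_(m, n)) :
  hermT (\sum_(i | P i) F i) = \sum_(i | P i) hermT (F i).
Proof.
apply/matrixP => i j; rewrite !mxE !summxE rmorph_sum.
by apply: eq_bigr => k _; rewrite !mxE.
Qed.

Lemma hermT_scalar n (a : R) : hermT ((a%:C)%:M : 'M[C]_n) = (a%:C)%:M.
Proof.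
apply/matrixP => i j; rewrite !mxE eq_sym.
by case: eqP => _; rewrite ?mulr1n ?mulr0n ?conjc_real ?conjc0.
Qed.

Lemma hermT_delta m n (i : 'I_m) (j : 'I_n) :
  hermT (delta_mx i j : 'M[C]_(m, n)) = delta_mx j i.
Proof. by apply/matrixP => a b; rewrite !mxE rmorph_nat andbC. Qed.

Lemma inner_conj n (x y : 'cV[C]_n) :
  (hermT x *m y) 0 0 = conjc ((hermT y *m x) 0 0).
Proof.
have -> : hermT x *m y = hermT (hermT y *m x) by rewrite hermT_mul hermTK.
by rewrite [LHS]mxE mxE.
Qed.

End HermitianTranspose.

Section SquaredNorm.
Variable R : rcfType.
Local Notation C := (R[i]).

Definition sqnorm m (x : 'cV[C]_m) : R := complex.Re ((hermT x *m x) 0 0).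

Lemma inner_self m (x : 'cV[C]_m) : (hermT x *m x) 0 0 = \sum_i `|x i 0| ^+ 2.
Proof. by rewrite !mxE; apply: eq_bigr => i _; rewrite !mxE normCK mulrC. Qed.

Lemma nonneg_complexE (z : C) : 0 <= z -> z = (complex.Re z)%:C.
Proof. by move=> z0; rewrite RRe_real // ger0_real. Qed.

Lemma inner_self_ge0 m (x : 'cV[C]_m) : 0 <= (hermT x *m x) 0 0.
Proof. by rewrite inner_self; apply: sumr_ge0 => i _; rewrite exprn_ge0. Qed.

Lemma sqnormE m (x : 'cV[C]_m) : (hermT x *m x) 0 0 = (sqnorm x)%:C.
Proof. exact/nonneg_complexE/inner_self_ge0. Qed.

Lemma sqnorm_ge0 m (x : 'cV[C]_m) : 0 <= sqnorm x.
Proof. by rewrite -ler0c -sqnormE inner_self_ge0. Qed.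

Lemma sqnorm_eq0 m (x : 'cV[C]_m) : (sqnorm x == 0) = (x == 0).
Proof.
apply/eqP/eqP => [x0|->]; last by rewrite /sqnorm mulmx0 mxE.
have : (hermT x *m x) 0 0 == 0 by rewrite sqnormE x0.
rewrite inner_self psumr_eq0 => [/allP xi0|i _]; last exact: exprn_ge0.
apply/matrixP => i j; rewrite ord1 mxE.
by have /xi0 := mem_index_enum i; rewrite /= sqrf_eq0 normr_eq0 => /eqP.
Qed.

Lemma sqnorm_gt0 m (x : 'cV[C]_m) : (0 < sqnorm x) = (x != 0).
Proof. by rewrite lt_def sqnorm_ge0 andbT sqnorm_eq0. Qed.

Lemma sqnormN m (x : 'cV[C]_m) : sqnorm (- x) = sqnorm x.
Proof. by rewrite /sqnorm hermTN mulNmx mulmxN opprK. Qed.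

End SquaredNorm.

Section InjectiveMatrices.
Variable R : rcfType.
Local Notation C := (R[i]).

Definition injmx m n (X : 'M[C]_(m, n)) :=
  forall y : 'cV[C]_n, X *m y = 0 -> y = 0.

Lemma injmx_rank m n (X : 'M[C]_(m, n)) : \rank X = n -> injmx X.
Proof.
move=> rkX y Xy0; have Xfree : row_free X^T by rewrite /row_free mxrank_tr rkX.
have : y^T *m X^T == 0 by rewrite -trmx_mul Xy0 trmx0.
by rewrite mulmx_free_eq0 // => /eqP/(congr1 trmx); rewrite trmxK trmx0.
Qed.

(* An injective X has no null eigenvector of X^H X, since
   ||X y||^2 = y^H (X^H X) y. *)
Lemma injmx_gram_eig0 m n (X : 'M[C]_(m, n)) :
  injmx X -> ~~ eigenvalue (hermT X *m X) 0.
Proof.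
move=> Xinj; apply/negP => /eigenvalueP [v vXHX]; apply/negP/negPn/eqP.
have XHXsym : hermT (hermT X *m X) = hermT X *m X by rewrite hermT_mul hermTK.
have XHXv : hermT X *m X *m hermT v = 0.
  by rewrite -XHXsym -hermT_mul vXHX scale0r hermT0.
have Xv0 : X *m hermT v = 0.
  apply/eqP; rewrite -sqnorm_eq0 /sqnorm hermT_mul -!mulmxA (mulmxA (hermT X)).
  by rewrite XHXv mulmx0 mxE.
by rewrite -[v]hermTK (Xinj _ Xv0) hermT0.
Qed.

Lemma row_free_hermT m n (X : 'M[C]_(m, n)) : injmx (hermT X) -> row_free X.
Proof.
move=> Xinj; rewrite -kermx_eq0; apply/eqP/row_matrixP => i; rewrite row0.
set v := row i _; have vX0 : v *m X = 0 by rewrite -row_mul mulmx_ker row0.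
have : hermT X *m hermT v = 0 by rewrite -hermT_mul vX0 hermT0.
by move/Xinj => v0; rewrite -[v]hermTK v0 hermT0.
Qed.

End InjectiveMatrices.

Section Rayleigh.
Variable R : rcfType.
Local Notation C := (R[i]).

Lemma diag_form n (z : 'cV[C]_n) (d : 'rV[C]_n) :
  (hermT z *m diag_mx d *m z) 0 0 = \sum_j `|z j 0| ^+ 2 * d 0 j.
Proof.
rewrite mul_mx_diag !mxE; apply: eq_bigr => j _.
by rewrite !mxE normCK mulrAC [z j 0 * _]mulrC.
Qed.

Lemma hermitian_spectral n (P : 'M[C]_n) : hermT P = P ->
  exists (U : 'M[C]_n) (d : 'rV[C]_n),
    [/\ U *m hermT U = 1%:M, hermT U *m U = 1%:M &
        P = hermT U *m diag_mx d *m U].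
Proof.
move=> Psym; have Pnormal : P \is normalmx.
  by apply/normalmxP; change (P *m hermT P = hermT P *m P); rewrite Psym.
have Uunitary := spectral_unitarymx P.
have UUH : spectralmx P *m hermT (spectralmx P) = 1%:M by apply/unitarymxP.
exists (spectralmx P), (spectral_diag P); split=> //; first exact: mulmx1C.
by move/orthomx_spectralP: Pnormal; rewrite invmx_unitary.
Qed.

Lemma unitary_diag_eigenvalue n (U : 'M[C]_n) (d : 'rV[C]_n) (j : 'I_n) :
  U *m hermT U = 1%:M -> eigenvalue (hermT U *m diag_mx d *m U) (d 0 j).
Proof.
move=> UUH; apply/eigenvalueP; exists (delta_mx 0 j *m U).
  rewrite !mulmxA -[delta_mx 0 j *m U *m hermT U]mulmxA UUH mulmx1.
  rewrite scalemxAl; congr (_ *m U); apply/matrixP => a b.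
  rewrite mul_mx_diag !mxE ord1 eqxx.
  by case: eqP => [->|_]; rewrite mulrC //= mulr0n !mulr0.
apply: contra_neq (@oner_neq0 C).
move=> /(congr1 (mulmx^~ (hermT U)))/matrixP/(_ 0 j).
by rewrite mul0mx -mulmxA UUH mulmx1 !mxE !eqxx.
Qed.

Lemma gram_diagonalization m n (X : 'M[C]_(m, n)) :
  exists (U : 'M[C]_n) (d : 'I_n -> R),
    [/\ forall j, eigenvalue (hermT X *m X) (d j)%:C,
        forall j, 0 <= d j,
        forall y, (sqnorm y)%:C = \sum_j `|(U *m y) j 0| ^+ 2 &
        forall y, (sqnorm (X *m y))%:C = \sum_j `|(U *m y) j 0| ^+ 2 * (d j)%:C].
Proof.
have [U [d [UUH UHU XHX]]] : exists (U : 'M[C]_n) (d : 'rV[C]_n),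
    [/\ U *m hermT U = 1%:M,
    hermT U *m U = 1%:M & hermT X *m X = hermT U *m diag_mx d *m U].
  by apply: hermitian_spectral; rewrite hermT_mul hermTK.
have normU y : (sqnorm y)%:C = \sum_j `|(U *m y) j 0| ^+ 2.
  by rewrite -sqnormE -inner_self hermT_mul -mulmxA (mulmxA (hermT U)) UHU mul1mx.
have gram y : (sqnorm (X *m y))%:C = \sum_j `|(U *m y) j 0| ^+ 2 * d 0 j.
  rewrite -sqnormE -diag_form hermT_mul -mulmxA (mulmxA (hermT X)) XHX.
  by rewrite hermT_mul !mulmxA.
have d_ge0 j : 0 <= d 0 j.
  have := sqnorm_ge0 (X *m (hermT U *m delta_mx j 0)); rewrite -ler0c gram.
  rewrite mulmxA UUH mul1mx (bigD1 j) //= big1 => [|i ij].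
    by rewrite mxE !eqxx normr1 expr1n mul1r addr0.
  by rewrite mxE (negPf ij) normr0 expr0n mul0r.
exists U, (fun j => complex.Re (d 0 j)); split=> [j|j|//|y].
- by rewrite -nonneg_complexE // XHX; apply: unitary_diag_eigenvalue.
- by rewrite -ler0c -nonneg_complexE.
- by rewrite gram; apply: eq_bigr => j _; rewrite -nonneg_complexE.
Qed.

Lemma rayleigh_bounds m n (X : 'M[C]_(m, n)) : (0 < n)%N ->
  exists dmin dmax : R,
    [/\ 0 <= dmin, eigenvalue (hermT X *m X) dmin%:C,
        eigenvalue (hermT X *m X) dmax%:C,
        forall y, dmin * sqnorm y <= sqnorm (X *m y) &
        forall y, sqnorm (X *m y) <= dmax * sqnorm y].
Proof.
move=> n_gt0; have [U [d [eig d_ge0 normU gram]]] := gram_diagonalization X.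
have [jmin _ dmin] := arg_minP d (P := xpredT) (i0 := Ordinal n_gt0) isT.
have [jmax _ dmax] := arg_maxP d (P := xpredT) (i0 := Ordinal n_gt0) isT.
exists (d jmin), (d jmax); split=> // y; rewrite -lecR rmorphM /= normU gram.
  rewrite mulr_sumr; apply: ler_sum => j _; rewrite mulrC.
  by apply: ler_wpM2l; rewrite ?exprn_ge0 // lecR dmin.
rewrite mulr_sumr; apply: ler_sum => j _; rewrite [_%:C * _]mulrC.
by apply: ler_wpM2l; rewrite ?exprn_ge0 // lecR; apply: dmax.
Qed.

Lemma sqrt_singval m n (X : 'M[C]_(m, n)) (d : R) : 0 < d ->
  eigenvalue (hermT X *m X) d%:C -> singval X (Num.sqrt d).
Proof.
move=> d_gt0 eig; split; first by rewrite sqrtr_gt0.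
by rewrite sqr_sqrtr // ltW.
Qed.

Lemma singval_upper m n (X : 'M[C]_(m, n)) (y : 'cV[C]_n) : (0 < n)%N ->
  0 < sqnorm (X *m y) ->
  exists2 s, singval X s & sqnorm (X *m y) <= s ^+ 2 * sqnorm y.
Proof.
move=> n_gt0 Xy_gt0; have [_ [d [_ _ eig _ up]]] := rayleigh_bounds X n_gt0.
have d_gt0 : 0 < d.
  rewrite ltNge; apply/negP => d_le0; move: (lt_le_trans Xy_gt0 (up y)).
  by rewrite ltNge mulr_le0_ge0 ?sqnorm_ge0.
exists (Num.sqrt d); first exact: sqrt_singval.
by rewrite sqr_sqrtr // ltW.
Qed.

Lemma singval_lower m n (X : 'M[C]_(m, n)) : (0 < n)%N -> injmx X ->
  exists2 s, singval X s & forall y, s ^+ 2 * sqnorm y <= sqnorm (X *m y).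
Proof.
move=> n_gt0 Xinj; have [d [_ [d_ge0 eig _ low _]]] := rayleigh_bounds X n_gt0.
have d_gt0 : 0 < d.
  rewrite lt_def d_ge0 andbT; apply: contraNneq (injmx_gram_eig0 Xinj) => d0.
  by move: eig; rewrite d0 rmorph0.
exists (Num.sqrt d); first exact: sqrt_singval.
by move=> y; rewrite sqr_sqrtr // ltW.
Qed.

End Rayleigh.

Section Channel.
Variable R : rcfType.
Local Notation C := (R[i]).

(* The singular value condition sigma_max(G) sigma_max(Hr) < sigma_min(Hd)
   makes the perturbation G Hr too small to cancel Hd on any nonzero
   vector, so the combined channel G Hr + Hd has a trivial kernel. *)
Lemma channel_injmx M N K (G : 'M[C]_(M, N)) (Hr : 'M[C]_(N, K))
    (Hd : 'M[C]_(M, K)) :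
  (0 < K)%N -> (0 < N)%N -> \rank Hd = K -> sv_condition G Hr Hd ->
  injmx (G *m Hr + Hd).
Proof.
move=> K_gt0 N_gt0 rkHd sv x Hx0; apply/eqP; apply: contraT => x_neq0.
have Hdinj := injmx_rank rkHd.
have Hdx : Hd *m x = - (G *m (Hr *m x)).
  by apply/eqP; rewrite -addr_eq0 addrC mulmxA -mulmxDl Hx0.
have Hdx_gt0 : 0 < sqnorm (Hd *m x).
  by rewrite sqnorm_gt0; apply: contra_neq x_neq0; apply: Hdinj.
have GHrx_gt0 : 0 < sqnorm (G *m (Hr *m x)) by rewrite -sqnormN -Hdx.
have Hrx_gt0 : 0 < sqnorm (Hr *m x).
  rewrite sqnorm_gt0; apply: contraTneq GHrx_gt0 => ->.
  by rewrite sqnorm_gt0 mulmx0 eqxx.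
have [c svc low] := singval_lower K_gt0 Hdinj.
have [a sva upG] := singval_upper N_gt0 GHrx_gt0.
have [b svb upHr] := singval_upper K_gt0 Hrx_gt0.
have ab_lt_c := sv a b c sva svb svc.
have [a_gt0 _] := sva; have [b_gt0 _] := svb; have [c_gt0 _] := svc.
have : c ^+ 2 * sqnorm x <= (a * b) ^+ 2 * sqnorm x.
  apply: (le_trans (low x)); rewrite Hdx sqnormN; apply: (le_trans upG).
  by rewrite exprMn -[_ * _ * sqnorm x]mulrA ler_pM2l ?exprn_gt0.
have sq_lt : (a * b) ^+ 2 < c ^+ 2.
  by rewrite ltrXn2r // ?(mulr_ge0 (ltW a_gt0) (ltW b_gt0)) ?(ltW c_gt0).
by rewrite ler_pM2r ?sqnorm_gt0 // leNgt sq_lt.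
Qed.

(* An injective H admits dual vectors w_k with h_i^H w_k = delta_ik,
   where h_i is the i-th column of H (a right inverse of H^H). *)
Lemma dual_vectors M K (H : 'M[C]_(M, K)) : injmx H ->
  exists w : 'I_K -> 'cV[C]_M,
    forall i k, hermT (col i H) *m w k = ((i == k)%:R)%:M.
Proof.
move=> Hinj; have /row_freeP [Z HZ] : row_free (hermT H).
  by apply: row_free_hermT; rewrite hermTK.
exists (fun k => Z *m delta_mx k 0) => i k.
rewrite colE hermT_mul hermT_delta mulmxA -(mulmxA _ (hermT H)) HZ mulmx1.
rewrite mul_delta_mx_cond; apply/matrixP => a b.
by rewrite !ord1 !mxE eqxx; case: (i == k); rewrite ?mulr0n ?mulr1n ?mxE.
Qed.

End Channel.

Section QuadraticForm.
Variable R : rcfType.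
Local Notation C := (R[i]).

Lemma dual_neq0 n (h w : 'cV[C]_n) : hermT h *m w = 1%:M -> w != 0.
Proof.
move=> hw; apply: contra_eq_neq hw => ->.
apply/eqP => /matrixP/(_ 0 0); rewrite mulmx0 !mxE => /eqP.
by rewrite eq_sym oner_eq0.
Qed.

(* Cauchy-Schwarz in the inner product <x, y> = x^H W y of a positive
   semidefinite Hermitian W: if W u = h and h^H w = 1, then
   h^H u = <u, u> >= 1 / <w, w>.  This bounds h^H W^-1 h from below. *)
Lemma quadform_lb n (W : 'M[C]_n) (h u w : 'cV[C]_n) (t : R) :
  hermT W = W -> (forall x : 'cV[C]_n, 0 <= (hermT x *m W *m x) 0 0) ->
  W *m u = h -> hermT h *m w = 1%:M ->
  (hermT w *m W *m w) 0 0 = t%:C -> 0 < t ->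
  (t^-1)%:C <= (hermT h *m u) 0 0.
Proof.
move=> Wsym Wpsd Wu hw wWw t_gt0.
pose B (x y : 'cV[C]_n) := (hermT x *m W *m y) 0 0.
have BBl x1 x2 y : B (x1 - x2) y = B x1 y - B x2 y.
  by rewrite /B hermTB !mulmxBl mxE [X in _ + X]mxE.
have BBr x y1 y2 : B x (y1 - y2) = B x y1 - B x y2.
  by rewrite /B mulmxBr mxE [X in _ + X]mxE.
have BZl (a : R) x y : B (a%:C *: x) y = a%:C * B x y.
  by rewrite /B hermTZ conjc_real -!scalemxAl mxE.
have BZr x (a : C) y : B x (a *: y) = a * B x y.
  by rewrite /B -scalemxAr mxE.
have uW : hermT u *m W = hermT h by rewrite -Wu hermT_mul Wsym.
have Buu : B u u = (hermT h *m u) 0 0 by rewrite /B uW.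
have Buw : B u w = 1 by rewrite /B uW hw mxE.
have Bwu : B w u = 1 by rewrite /B -mulmxA Wu inner_conj hw mxE conjc1.
set c := t^-1; have ct : c%:C * (c%:C * t%:C) = c%:C.
  by rewrite -!rmorphM /c mulVf ?mulr1 ?gt_eqF.
have := Wpsd (u - c%:C *: w); rewrite -/(B _ _) BBl !BBr BZl !BZr BZl.
by rewrite Buu Buw Bwu /B wWw ct mulr1 opprB addrA subrK subr_ge0.
Qed.

End QuadraticForm.

Section InterferenceMatrix.
Variables (R : rcfType) (M N K : nat).
Local Notation C := (R[i]).
Variables (G : 'M[C]_(M, N)) (Hr : 'M[C]_(N, K)) (Hd : 'M[C]_(M, K)).
Variables (sigma2 : R) (phi : 'rV[C]_N) (q : 'I_K -> R) (k : 'I_K).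
Hypotheses (sigma2_gt0 : 0 < sigma2) (q_ge0 : forall i, 0 <= q i).

Let h := eff_chan G Hr Hd phi.
Let W := Wmat G Hr Hd sigma2 phi q k.

Lemma Wmat_herm : hermT W = W.
Proof.
rewrite /W /Wmat hermTD hermT_scalar hermT_sum; congr (_ + _).
by apply: eq_bigr => i _; rewrite hermTZ conjc_real hermT_mul hermTK.
Qed.

(* ... and dominates sigma^2 I, since x^H W_k x =
   sigma^2 ||x||^2 + sum_{i <> k} q_i |h_i^H x|^2. *)
Lemma Wmat_form (x : 'cV[C]_M) :
  (sigma2 * sqnorm x)%:C <= (hermT x *m W *m x) 0 0.
Proof.
have -> : hermT x *m W *m x = sigma2%:C *: (hermT x *m x) +
    \sum_(i < K | i != k) (q i)%:C *:
      (hermT (hermT (h i) *m x) *m (hermT (h i) *m x)).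
  rewrite /W /Wmat mulmxDr mulmxDl mul_mx_scalar -scalemxAl; congr (_ + _).
  rewrite mulmx_sumr mulmx_suml; apply: eq_bigr => i _.
  by rewrite -scalemxAr -scalemxAl hermT_mul hermTK !mulmxA.
rewrite mxE summxE rmorphM /= -sqnormE [X in _ <= X + _]mxE lerDl.
apply: sumr_ge0 => i _.
by rewrite mxE mulr_ge0 ?ler0c // sqnormE ler0c sqnorm_ge0.
Qed.

(* Hence W_k is invertible, so the SINR formula is meaningful. *)
Lemma Wmat_unit : W \in unitmx.
Proof.
rewrite -row_free_unit; apply: row_free_hermT.
rewrite Wmat_herm => y Wy0; apply/eqP; rewrite -sqnorm_eq0 eq_le sqnorm_ge0 andbT.
have := Wmat_form y; rewrite -mulmxA Wy0 mulmx0 mxE -[0 : C]/(0%:C) lecR.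
by rewrite pmulr_rle0.
Qed.

Lemma Wmat_eigvec (w : 'cV[C]_M) :
  (forall i, i != k -> hermT (h i) *m w = 0) -> W *m w = sigma2%:C *: w.
Proof.
move=> hw; rewrite /W /Wmat mulmxDl mul_scalar_mx mulmx_suml.
rewrite big1 ?addr0 // => i ik.
by rewrite -scalemxAl -mulmxA hw // mulmx0 scaler0.
Qed.

Lemma sinr_dual_lb (w : 'cV[C]_M) :
  (forall i, hermT (h i) *m w = ((i == k)%:R)%:M) ->
  (q k / (sigma2 * sqnorm w))%:C <= sinr G Hr Hd sigma2 phi q k.
Proof.
move=> hw; have hkw : hermT (h k) *m w = 1%:M by rewrite hw eqxx.
have w_gt0 : 0 < sigma2 * sqnorm w.
  by rewrite mulr_gt0 ?sqnorm_gt0 ?(dual_neq0 hkw).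
have Ww : W *m w = sigma2%:C *: w.
  by apply: Wmat_eigvec => i ik; rewrite hw (negPf ik) raddf0.
rewrite /sinr -mulmxA rmorphM /=; apply: ler_wpM2l; first by rewrite ler0c.
apply: (quadform_lb Wmat_herm _ _ hkw) => //.
- move=> x; apply: le_trans (Wmat_form x).
  by rewrite ler0c mulr_ge0 ?sqnorm_ge0 ?ltW.
- by rewrite mulmxA mulmxV ?Wmat_unit // mul1mx.
- by rewrite -mulmxA Ww -scalemxAr mxE sqnormE rmorphM.
Qed.

End InterferenceMatrix.

Theorem lemma1 (R : rcfType) (M K N : nat) (sigma2 : R)
    (G : 'M[R[i]]_(M, N)) (Hr : 'M[R[i]]_(N, K)) (Hd : 'M[R[i]]_(M, K))
    (r : 'I_K -> R) :
  (1 <= K)%N -> (K <= M)%N -> (1 <= N)%N -> 0 < sigma2 ->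
  \rank Hd = K ->
  sv_condition G Hr Hd ->
  (forall k, 0 <= r k) ->
  exists (phi : 'rV[R[i]]_N) (q : 'I_K -> R),
    (forall n, `|phi 0 n| = 1) /\
    (forall k, 0 < q k) /\
    (forall k, (r k)%:C <= sinr G Hr Hd sigma2 phi q k).
Proof.
move=> K_gt0 _ N_gt0 sigma2_gt0 rkHd sv r_ge0.
pose phi : 'rV[R[i]]_N := const_mx 1.
have h_col i : eff_chan G Hr Hd phi i = col i (G *m Hr + Hd).
  by rewrite /eff_chan diag_const_mx mulmx1 !colE mulmxDl mulmxA.
have [w hw] := dual_vectors (channel_injmx K_gt0 N_gt0 rkHd sv).
have w_neq0 k : w k != 0.
  by apply: (@dual_neq0 _ _ (col k (G *m Hr + Hd))); rewrite hw eqxx.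
pose q k := (r k + 1) * (sigma2 * sqnorm (w k)).
have q_gt0 k : 0 < q k by rewrite !mulr_gt0 ?ltr_wpDl ?sqnorm_gt0.
exists phi, q; split; first by move=> n; rewrite mxE normr1.
split=> // k; have hwk i :
    hermT (eff_chan G Hr Hd phi i) *m w k = ((i == k)%:R)%:M.
  by rewrite h_col hw.
apply: le_trans (sinr_dual_lb sigma2_gt0 (fun i => ltW (q_gt0 i)) hwk).
by rewrite /q mulfK ?gt_eqF ?mulr_gt0 ?sqnorm_gt0 // lecR lerDl.
Qed.
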